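(* Let $\mathcal M=\langle Q,R,f,\mathcal I\rangle$ be a monotonic automaton with $Q\cap R=\varnothing$, and let $\langle q_0,S_0\rangle$ be a configuration. Treat elements of $Q\cup R$ as propositional variables and let $\Gamma$ be the set of implicational formulas consisting of: all atoms in $S_0\cup\{f\}$; for each instruction $q:\ \mathsf{check}\ \{s^1_1,\ldots,s^k_1\};\ \mathsf{set}\ \{s^1_2,\ldots,s^\ell_2\};\ \mathsf{jmp}\ p$ the formula $s^1_1\to\cdots\to s^k_1\to(s^1_2\to\cdots\to s^\ell_2\to p)\to q$; and for each instruction $q:\ \mathsf{jmp}\ p_1\ \mathsf{and}\ p_2$ the formula $p_1\to p_2\to q$. Then $\langle q_0,S_0\rangle$ is accepting if and only if $\Gamma\vdash q_0$ in intuitionistic implicational logic. Moreover every formula in $\Gamma$ has order at most two, so $\Gamma\to q_0$ has order at most three.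
   Context: A monotonic automaton is $\mathcal M=\langle Q,R,f,\mathcal I\rangle$ where $Q$ is a finite set of states with final state $f\in Q$, $R$ is a finite set of registers, and $\mathcal I$ is a finite set of instructions, each of the form (1) $q:\ \mathsf{check}\ S_1;\ \mathsf{set}\ S_2;\ \mathsf{jmp}\ p$, or (2) $q:\ \mathsf{jmp}\ p_1\ \mathsf{and}\ p_2$, with $q,p,p_1,p_2\in Q$ and $S_1,S_2\subseteq R$. A configuration is a pair $\langle q,S\rangle$ with $q\in Q$, $S\subseteq R$. An instruction of type (1) at state $q$ leads from $\langle q,S\rangle$ to $\langle p,S\cup S_2\rangle$ provided $S_1\subseteq S$; an instruction of type (2) at $q$ leads from $\langle q,S\rangle$ to both $\langle p_1,S\rangle$ and $\langle p_2,S\rangle$. The set of accepting configurations is the least set such that: $\langle f,S\rangle$ is accepting; $\langle q,S\rangle$ is accepting if some type (1) instruction at $q$ applies and leads to an accepting configuration; $\langle q,S\rangle$ is accepting if some type (2) instruction at $q$ leads to two configurations $\langle p_1,S\rangle,\langle p_2,S\rangle$ that are both accepting. Intuitionistic implicational logic (IIPC) has formulas built from propositional variables by $\to$ only (right-associative), with provability given by natural deduction (simply typed lambda calculus). For a finite set $\Gamma=\{\varphi_1,\ldots,\varphi_n\}$, $\Gamma\to p$ denotes $\varphi_1\to\cdots\to\varphi_n\to p$. Order: an atom has order $0$, and $r(\sigma\to\tau)=\max(r(\tau),r(\sigma)+1)$. *)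

From mathcomp Require Import all_boot.
From Stdlib Require List.
Set Implicit Arguments. Unset Strict Implicit. Unset Printing Implicit Defensive.

Section Automata.
Variables (Q R : finType).

Inductive instr : Type :=
| ICheck (q : Q) (S1 S2 : {set R}) (p : Q)
| IFork (q : Q) (p1 p2 : Q).

(* M = <Q, R, f, I>; Q and R are the carrier finTypes, the instruction set
   I is a finite set given as a list. *)
Record automaton : Type := Automaton {
  final : Q;
  instrs : seq instr }.

Inductive accepting (M : automaton) : Q -> {set R} -> Prop :=
| acc_final : forall S : {set R}, accepting M (final M) S
| acc_check : forall q (S1 S2 : {set R}) p (S : {set R}),
    List.In (ICheck q S1 S2 p) (instrs M) -> S1 \subset S ->
    accepting M p (S :|: S2) -> accepting M q S
| acc_fork : forall q p1 p2 (S : {set R}),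
    List.In (IFork q p1 p2) (instrs M) ->
    accepting M p1 S -> accepting M p2 S -> accepting M q S.
End Automata.

Inductive form (A : Type) : Type :=
| Var (a : A)
| Imp (phi psi : form A).
Arguments Var {A} a.
Arguments Imp {A} phi psi.

Inductive ND {A : Type} : seq (form A) -> form A -> Prop :=
| nd_ax : forall G phi, List.In phi G -> ND G phi
| nd_intro : forall G phi psi, ND (phi :: G) psi -> ND G (Imp phi psi)
| nd_elim : forall G phi psi, ND G (Imp phi psi) -> ND G phi -> ND G psi.

Fixpoint form_order {A : Type} (phi : form A) : nat :=
  match phi with
  | Var _ => 0
  | Imp s t => maxn (form_order t) (form_order s).+1
  end.

Definition imps {A : Type} (G : seq (form A)) (tau : form A) : form A :=
  foldr Imp tau G.

Section Encoding.
Variables (Q R : finType).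
(* Propositional variables are the elements of Q ∪ R, with Q ∩ R = ∅:
   modelled as the disjoint sum Q + R. *)
Definition atQ (q : Q) : form (Q + R) := Var (inl q).
Definition atR (r : R) : form (Q + R) := Var (inr r).

Definition instr_formula (i : instr Q R) : form (Q + R) :=
  match i with
  | ICheck q S1 S2 p =>
      imps [seq atR s | s <- enum S1]
           (Imp (imps [seq atR s | s <- enum S2] (atQ p)) (atQ q))
  | IFork q p1 p2 => Imp (atQ p1) (Imp (atQ p2) (atQ q))
  end.

Definition Gamma (M : automaton Q R) (S0 : {set R}) : seq (form (Q + R)) :=
  [seq atR s | s <- enum S0] ++ [:: atQ (final M)]
  ++ [seq instr_formula i | i <- instrs M].
End Encoding.

(* Soundness: interpret IIPC in the Kripke model whose worlds are register
   sets ordered by inclusion, a state atom q holding at S iff <q, S> is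
   accepting and a register atom r iff r is in S.  Acceptance is monotone in
   S, so this is a Kripke model, and every formula of Gamma is forced at S0.
   Completeness: by induction on acceptance an accepting run is read off as a
   proof; a check instruction becomes an application whose argument is proved
   with the atoms of the set registers as extra hypotheses. *)

From mathcomp Require Import all_boot.
From Stdlib Require List.

Set Implicit Arguments. Unset Strict Implicit. Unset Printing Implicit Defensive.

Lemma In_mem (T : eqType) (x : T) (s : seq T) : List.In x s <-> x \in s.
Proof.
elim: s => [|a s IH] //=; rewrite in_cons; split.
- by case=> [->|/IH ->]; rewrite ?eqxx ?orbT.
- by case/orP=> [/eqP ->|/IH]; [left|right].
Qed.

Lemma In_enum (T : finType) (A : {set T}) x : List.In x (enum A) <-> x \in A.
Proof. by rewrite In_mem mem_enum. Qed.

Lemma In_map_iff (T U : Type) (f : T -> U) (s : seq T) y :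
  List.In y (map f s) <-> exists x, f x = y /\ List.In x s.
Proof. exact: List.in_map_iff. Qed.

Section NaturalDeduction.
Variable A : Type.
Implicit Types (G : seq (form A)) (phi t : form A) (l : seq (form A)).

Lemma nd_weaken G phi : ND G phi -> forall G', List.incl G G' -> ND G' phi.
Proof.
elim=> {G phi} [G phi Hphi|G phi psi _ IH|G phi psi _ IH1 _ IH2] G' HG.
- exact/nd_ax/HG.
- by apply/nd_intro/IH => x [<-|/HG Hx]; [left|right].
- exact: nd_elim (IH1 G' HG) (IH2 G' HG).
Qed.

Lemma nd_imps_intro l G t : ND (l ++ G) t -> ND G (imps l t).
Proof.
elim: l G => [|a l IH] //= G H; apply/nd_intro/IH.
apply: (nd_weaken H) => x /=; rewrite !List.in_app_iff /=; tauto.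
Qed.

Lemma nd_imps_elim l G t :
  (forall x, List.In x l -> ND G x) -> ND G (imps l t) -> ND G t.
Proof.
elim: l => [|a l IH] //= Hl H; apply: IH => [x Hx|]; first by apply: Hl; right.
by apply: nd_elim H _; apply: Hl; left.
Qed.

Lemma form_order_imps l t n :
  (forall x, List.In x l -> form_order x <= n) -> form_order t <= n.+1 ->
  form_order (imps l t) <= n.+1.
Proof.
elim: l => [|a l IH] //= Hl Ht; rewrite geq_max ltnS.
by rewrite IH ?Hl //= => [|x Hx]; [left|apply: Hl; right].
Qed.

End NaturalDeduction.

Section KripkeSubsets.
Variables (A : Type) (T : finType) (val : A -> {set T} -> Prop).
Hypothesis val_mono : forall a (S S' : {set T}), S \subset S' -> val a S -> val a S'.

Fixpoint forces (S : {set T}) (phi : form A) : Prop :=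
  match phi with
  | Var a => val a S
  | Imp phi psi => forall S' : {set T}, S \subset S' -> forces S' phi -> forces S' psi
  end.

Lemma forces_mono phi (S S' : {set T}) : S \subset S' -> forces S phi -> forces S' phi.
Proof.
case: phi => [a|phi psi] /= HS; first exact: val_mono.
by move=> H S'' HS'; apply: H; apply: subset_trans HS HS'.
Qed.

Lemma nd_sound G phi : ND G phi -> forall S,
  (forall psi, List.In psi G -> forces S psi) -> forces S phi.
Proof.
elim=> {G phi} [G phi Hphi S HG|G phi psi _ IH S HG|G phi psi _ IH1 _ IH2 S HG].
- exact: HG.
- move=> S' HS' Hphi; apply: IH => x [<-//|Hx].
  exact: forces_mono HS' (HG x Hx).
- exact: IH1 _ HG _ (subxx _) (IH2 _ HG).
Qed.

Lemma forces_imps_intro l t (S : {set T}) :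
  (forall S' : {set T}, S \subset S' -> (forall x, List.In x l -> forces S' x) -> forces S' t) ->
  forces S (imps l t).
Proof.
elim: l S => [|a l IH] S /= H; first exact: H (subxx _) _.
move=> S' HS' Ha; apply: IH => S'' HS'' Hl; apply: H.
- exact: subset_trans HS' HS''.
- by move=> x [<-|Hx]; [apply: forces_mono HS'' Ha|apply: Hl].
Qed.

Lemma forces_imps_elim l t (S : {set T}) :
  forces S (imps l t) -> (forall x, List.In x l -> forces S x) -> forces S t.
Proof.
elim: l => [|a l IH] //= H Hl; apply: IH => [|x Hx]; last by apply: Hl; right.
by apply: H (subxx _) _; apply: Hl; left.
Qed.

End KripkeSubsets.

Section Encoding.
Variables (Q R : finType) (M : automaton Q R).

Lemma accepting_subset q S : accepting M q S ->
  forall S' : {set R}, S \subset S' -> accepting M q S'.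
Proof.
elim=> {q S} [S|q S1 S2 p S Hin HS1 _ IH|q p1 p2 S Hin _ IH1 _ IH2] S' HS'.
- exact: acc_final.
- by apply: (acc_check Hin (subset_trans HS1 HS')); apply/IH/setSU.
- by apply: (acc_fork Hin); [apply: IH1|apply: IH2].
Qed.

Lemma In_atoms (S : {set R}) psi :
  List.In psi [seq atR Q s | s <- enum S] <-> exists2 s, s \in S & psi = atR Q s.
Proof.
rewrite In_map_iff; split=> [[s [<- /In_enum Hs]]|[s Hs ->]].
- by exists s.
- by exists s; split; last exact/In_enum.
Qed.

Lemma In_Gamma S0 psi : List.In psi (Gamma M S0) <->
  [\/ exists2 s, s \in S0 & psi = atR Q s, psi = atQ R (final M)
    | exists2 i, List.In i (instrs M) & psi = instr_formula i].
Proof.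
rewrite /Gamma /= List.in_app_iff /= In_atoms In_map_iff.
split=> [[|[<-|[i [<- Hi]]]]|[||[i Hi ->]]]; try by [constructor|left|right; left].
- by constructor 3; exists i.
- by right; right; exists i.
Qed.

Definition accepting_val (a : Q + R) (S : {set R}) : Prop :=
  match a with
  | inl q => accepting M q S
  | inr r => r \in S
  end.

Lemma accepting_val_mono a (S S' : {set R}) :
  S \subset S' -> accepting_val a S -> accepting_val a S'.
Proof.
case: a => [q|r] /= HS; first by move/accepting_subset; apply.
exact: (subsetP HS).
Qed.

Notation forced := (forces accepting_val).

Lemma forced_atoms (S S' : {set R}) : S \subset S' ->
  forall x, List.In x [seq atR Q s | s <- enum S] -> forced S' x.
Proof. by move=> HS x /In_atoms [s Hs ->]; apply: (subsetP HS). Qed.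

Lemma instr_formula_forced i (S : {set R}) :
  List.In i (instrs M) -> forced S (instr_formula i).
Proof.
case: i => [q S1 S2 p|q p1 p2] Hin /=.
- apply: (forces_imps_intro accepting_val_mono) => S' _ HS1 S'' HS'' Hp.
  apply: (acc_check Hin).
  + apply/subsetP => s Hs; apply: (subsetP HS'').
    by apply: (HS1 (atR Q s)); apply/In_atoms; exists s.
  + apply: (forces_imps_elim (forces_mono accepting_val_mono (subsetUl _ _) Hp)).
    exact/forced_atoms/subsetUr.
- move=> S' _ H1 S'' HS'' H2; apply: (acc_fork Hin _ H2).
  exact: accepting_subset H1 _ HS''.
Qed.

Lemma Gamma_forced S0 psi : List.In psi (Gamma M S0) -> forced S0 psi.
Proof.
case/In_Gamma=> [[s Hs ->]|->|[i Hi ->]] //=; first exact: acc_final.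
exact: instr_formula_forced.
Qed.

Lemma accepting_ND q S : accepting M q S ->
  forall G, List.incl (Gamma M S) G -> ND G (atQ R q).
Proof.
elim=> {q S} [S|q S1 S2 p S Hin HS1 _ IH|q p1 p2 S Hin _ IH1 _ IH2] G HGam.
- by apply/nd_ax/HGam/In_Gamma; constructor 2.
- have Hi : ND G (instr_formula (ICheck q S1 S2 p)).
    by apply/nd_ax/HGam/In_Gamma; constructor 3; exists (ICheck q S1 S2 p).
  apply: nd_elim (nd_imps_elim _ Hi) _ => [x /In_atoms [s Hs ->]|].
    by apply/nd_ax/HGam/In_Gamma; constructor 1; exists s => //; apply: (subsetP HS1).
  apply/nd_imps_intro/IH => psi /In_Gamma [[s]|->|[i Hi' ->]]; rewrite List.in_app_iff.
  + rewrite in_setU => /orP[Hs|Hs] ->; last by left; apply/In_atoms; exists s.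
    by right; apply/HGam/In_Gamma; constructor 1; exists s.
  + by right; apply/HGam/In_Gamma; constructor 2.
  + by right; apply/HGam/In_Gamma; constructor 3; exists i.
- have Hf : ND G (instr_formula (IFork R q p1 p2)).
    by apply/nd_ax/HGam/In_Gamma; constructor 3; exists (IFork R q p1 p2).
  exact: nd_elim (nd_elim Hf (IH1 G HGam)) (IH2 G HGam).
Qed.

Lemma Gamma_order S0 psi : List.In psi (Gamma M S0) -> form_order psi <= 2.
Proof.
have atoms_order n (S : {set R}) x :
    List.In x [seq atR Q s | s <- enum S] -> form_order x <= n.
  by move/In_atoms=> [s _ ->].
case/In_Gamma=> [[s _ ->]|->|[[q S1 S2 p|q p1 p2] _ ->]] //=.
apply: form_order_imps => [x|]; first exact: atoms_order.
by rewrite /= geq_max /= ltnS; apply: form_order_imps => // x; apply: atoms_order.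
Qed.

End Encoding.

Theorem lemma3p9 (Q R : finType) (M : automaton Q R) (q0 : Q) (S0 : {set R}) :
  (accepting M q0 S0 <-> ND (Gamma M S0) (atQ R q0)) /\
  (forall phi, List.In phi (Gamma M S0) -> form_order phi <= 2) /\
  form_order (imps (Gamma M S0) (atQ R q0)) <= 3.
Proof.
split; last split; last by apply: form_order_imps => // phi /Gamma_order.
- split=> [Hacc|HND]; first exact: accepting_ND Hacc _ (List.incl_refl _).
  exact: (nd_sound (@accepting_val_mono _ _ M) HND (@Gamma_forced _ _ M S0)).
- exact: Gamma_order.
Qed.
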